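(* Let $0<\varepsilon<1/5$ and let $G$ be a bipartite graph on $n$ vertices with partition classes $V_1,V_2$ of equal size, such that $G$ has minimum degree at least $(1-\varepsilon)n/2$. If the edges of $G$ are coloured red and blue and this colouring is not a split colouring, then there are two vertex-disjoint connected matchings of distinct colours (one red, one blue) that together cover all but at most $4\varepsilon n$ vertices of $G$.
   Context: The edge colouring is an arbitrary red/blue assignment. For a bipartite graph with partition classes $U,V$, a red/blue edge colouring is a split colouring if there are partitions $U=A\cup B$ and $V=C\cup D$ (some of these sets may be empty) such that all edges of the graph between $A$ and $C$ and between $B$ and $D$ are blue, and all edges of the graph between $A$ and $D$ and between $B$ and $C$ are red. A monochromatic matching is called connected if all its edges lie in a single connected component of the subgraph formed by the edges of that colour. Matchings may be empty. *)

From HB Require Import structures.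
From mathcomp Require Import all_boot all_order all_algebra.
Set Implicit Arguments. Unset Strict Implicit. Unset Printing Implicit Defensive.
Import Order.TTheory GRing.Theory Num.Theory.

(* A red/blue edge colouring is a function
   col : U -> V -> bool ("true" = red, "false" = blue), only relevant on
   edges.  Vertices of the whole graph are elements of U + V; edges of the
   graph are pairs (u, v) : U * V with adj u v. *)

Section Bip.
Variables (U V : finType) (adj col : U -> V -> bool).

Definition degU (u : U) : nat := #|[set v | adj u v]|.
Definition degV (v : V) : nat := #|[set u | adj u v]|.

Definition colrel (c : bool) : rel (U + V) :=
  fun x y => match x, y with
             | inl u, inr v => adj u v && (col u v == c)
             | inr v, inl u => adj u v && (col u v == c)
             | _, _ => false
             end.

(* split colouring: partitions U = A ∪ B, V = C ∪ D with B = ~: A, D = ~: C *)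
Definition split_colouring : Prop :=
  exists (A : {set U}) (C : {set V}),
    forall u v, adj u v ->
      [/\ (u \in A) -> (v \in C) -> col u v = false,
          (u \notin A) -> (v \notin C) -> col u v = false,
          (u \in A) -> (v \notin C) -> col u v = true &
          (u \notin A) -> (v \in C) -> col u v = true].

Definition is_matching (M : {set U * V}) : Prop :=
  (forall e, e \in M -> adj e.1 e.2) /\
  (forall e f, e \in M -> f \in M -> (e.1 = f.1 \/ e.2 = f.2) -> e = f).

Definition connected_matching (c : bool) (M : {set U * V}) : Prop :=
  is_matching M /\
  (forall e, e \in M -> col e.1 e.2 = c) /\
  (forall e f, e \in M -> f \in M -> connect (colrel c) (inl e.1) (inl f.1)).

Definition covered (M : {set U * V}) : {set U + V} :=
  [set x | [exists e in M, (x == inl e.1) || (x == inr e.2)]].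

End Bip.

From HB Require Import structures.
From mathcomp Require Import all_boot all_order all_algebra.
Import Order.TTheory GRing.Theory Num.Theory.
From mathcomp Require Import zify lra.
Set Implicit Arguments. Unset Strict Implicit. Unset Printing Implicit Defensive.

(* Choose one monochromatic component for each colour and keep only the edges
   lying in the chosen component of their own colour.  A maximum matching [M]
   of this subgraph splits into a red and a blue connected matching with
   disjoint vertex sets, leaving [2 (k - #|M|)] vertices uncovered, so it
   suffices to choose the components with [k - #|M| <= 4 f], where every degree
   is at least [k - f] and [f <= eps k].

   Everything rests on the fact that two unmatched vertices [x], [y] of a
   maximum matching satisfy [deg x + deg y <= #|M|].  If the colouring is not
   split, some edge [u v] has [v] in both the red and the blue component of [u]:
   otherwise every 4-cycle has an even number of red edges, and since any
   three vertices of [U] have a common neighbour the colouring is split.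
   Rooting both components at [u], all but [f] vertices on each side lie in one
   of them.  If on one side few vertices lie in only one component, an
   unmatched vertex lying in both keeps its full degree and bounds the deficit.
   Otherwise one component misses at most [2 f] vertices on each side; paired
   with a largest component of the other colour it again gives a small
   deficit: otherwise the other-colour component through a suitable edge
   between unmatched vertices would have more than [k] vertices while being
   disjoint from the largest one. *)

Lemma exists_inI (T : finType) (A B : {set T}) :
  #|T| < #|A| + #|B| -> exists2 x, x \in A & x \in B.
Proof.
move=> lt_T; have : 0 < #|A :&: B| by have := cardsUI A B; have := max_card (A :|: B); lia.
by case/card_gt0P=> x /setIP[]; exists x.
Qed.

Lemma card_disjointU (T : finType) (A B : {set T}) :
  [disjoint A & B] -> #|A :|: B| = #|A| + #|B|.
Proof. by move=> dAB; have [_ /eqP] := leq_card_setU A B; rewrite dAB. Qed.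

Lemma card_set_predC (T : finType) (p : pred T) :
  #|[set x | p x]| + #|[set x | ~~ p x]| = #|T|.
Proof. by rewrite -(cardsC [set x | p x]); congr (_ + _); apply: eq_card => x; rewrite !inE. Qed.

Section Matchings.
Variables (U V : finType) (P : U -> V -> bool).
Implicit Types (M : {set U * V}) (x : U) (y : V).

Definition matchingb M : bool :=
  [forall e in M, P e.1 e.2] &&
  [forall e in M, [forall e' in M, (e.1 == e'.1) || (e.2 == e'.2) ==> (e == e')]].

Lemma matchingP M : reflect (is_matching P M) (matchingb M).
Proof.
apply: (iffP andP) => [[/forall_inP edgeM /forall_inP injM] | [edgeM injM]]; split => //.
- move=> e e' eM e'M shared; apply/eqP.
  by move/forall_inP/(_ e' e'M)/implyP: (injM e eM); apply; case: shared => ->; rewrite eqxx ?orbT.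
- exact/forall_inP.
- apply/forall_inP=> e eM; apply/forall_inP=> e' e'M; apply/implyP=> /orP shared.
  by apply/eqP/injM => //; case: shared => /eqP; [left | right].
Qed.

Definition matchedU M : {set U} := [set e.1 | e in M].
Definition matchedV M : {set V} := [set e.2 | e in M].

Definition maximum_matching M :=
  is_matching P M /\ forall M', is_matching P M' -> #|M'| <= #|M|.

Lemma matching_subset M M' : is_matching P M -> M' \subset M -> is_matching P M'.
Proof.
move=> [edgeM injM] /subsetP sub; split=> [e /sub /edgeM // | e e' /sub eM /sub].
exact: injM.
Qed.

Lemma card_matchedU M : is_matching P M -> #|matchedU M| = #|M|.
Proof. by move=> [_ injM]; apply: card_in_imset => e e' eM e'M eq1; apply: injM => //; left. Qed.

Lemma card_matchedV M : is_matching P M -> #|matchedV M| = #|M|.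
Proof. by move=> [_ injM]; apply: card_in_imset => e e' eM e'M eq2; apply: injM => //; right. Qed.

Lemma card_unmatchedU M : is_matching P M -> #|~: matchedU M| = #|U| - #|M|.
Proof. by move=> mM; rewrite -(card_matchedU mM) -(cardsC (matchedU M)); lia. Qed.

Lemma card_unmatchedV M : is_matching P M -> #|~: matchedV M| = #|V| - #|M|.
Proof. by move=> mM; rewrite -(card_matchedV mM) -(cardsC (matchedV M)); lia. Qed.

Lemma matching_setU1 M x y : is_matching P M -> P x y ->
  x \notin matchedU M -> y \notin matchedV M ->
  is_matching P ((x, y) |: M) /\ #|(x, y) |: M| = #|M|.+1.
Proof.
move=> [edgeM injM] Pxy xM yM; split; last first.
  rewrite cardsU1 (_ : (x, y) \notin M) //.
  by apply: contra xM => xyM; apply: (imset_f (fun e : U * V => e.1) xyM).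
have fresh e : e \in M -> e.1 = x \/ e.2 = y -> False.
  by move=> eM [ex | ey]; [move: xM; rewrite -ex | move: yM; rewrite -ey]; rewrite imset_f.
split=> [e | e e']; first by rewrite !inE => /orP[/eqP -> // | /edgeM].
rewrite !inE => /orP[/eqP -> | eM] /orP[/eqP -> | e'M] //= shared.
- by case: (fresh e' e'M); case: shared; auto.
- by case: (fresh e eM); case: shared; auto.
- exact: injM.
Qed.

Lemma exists_maximum_matching : exists M, maximum_matching M.
Proof.
have m0 : matchingb set0 by apply/matchingP; split=> e; rewrite inE.
case: (arg_maxnP (fun M => #|M|) m0) => M /matchingP mM maxM.
by exists M; split=> // M' /matchingP /maxM.
Qed.

Section Maximum.
Variable M : {set U * V}.
Hypothesis maxM : maximum_matching M.

Lemma maximum_matching_no_free_edge x y : P x y ->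
  x \notin matchedU M -> y \notin matchedV M -> False.
Proof.
case: maxM => mM maxM' Pxy xM yM; have [m1 c1] := matching_setU1 mM Pxy xM yM.
by have := maxM' _ m1; rewrite c1 ltnn.
Qed.

Lemma maximum_matching_nbrV x y : x \notin matchedU M -> P x y -> y \in matchedV M.
Proof. by move=> xM Pxy; apply: contraT => /(maximum_matching_no_free_edge Pxy xM). Qed.

Lemma maximum_matching_nbrU x y : y \notin matchedV M -> P x y -> x \in matchedU M.
Proof. by move=> yM Pxy; apply: contraT => /maximum_matching_no_free_edge - /(_ y Pxy yM). Qed.

(* Replacing [e] by [(e.1, y)] and [(x, e.2)] would give a larger matching. *)
Lemma maximum_matching_no_augmenting_3path x y e : e \in M -> P x e.2 -> P e.1 y ->
  x \notin matchedU M -> y \notin matchedV M -> False.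
Proof.
case: maxM => mM maxM' eM Pxe Pey xM yM; have [_ injM] := mM.
have cardMe : #|M| = #|M :\ e|.+1 by rewrite (cardsD1 e M) eM.
have sub1 : M :\ e \subset M by apply: subsetDl.
have m1 := matching_subset mM sub1.
have e1 : e.1 \notin matchedU (M :\ e).
  by apply/imsetP=> -[e' /setD1P[/eqP + e'M] eq1]; apply; apply: injM => //; left.
have y1 : y \notin matchedV (M :\ e) by apply: contra yM; apply/subsetP/imsetS.
have [m2 c2] := matching_setU1 m1 Pey e1 y1.
have x2 : x \notin matchedU ((e.1, y) |: (M :\ e)).
  rewrite /matchedU imsetU1 !inE negb_or /=; apply/andP; split.
    by apply: contraNneq xM => ->; apply: (imset_f (fun e : U * V => e.1) eM).
  by apply: contra xM; apply/subsetP/imsetS.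
have e2 : e.2 \notin matchedV ((e.1, y) |: (M :\ e)).
  rewrite /matchedV imsetU1 !inE negb_or /=; apply/andP; split.
    by apply: contraNneq yM => <-; apply: (imset_f (fun e : U * V => e.2) eM).
  by apply/imsetP=> -[e' /setD1P[/eqP + e'M] eq2]; apply; apply: injM => //; right.
have [m3 c3] := matching_setU1 m2 Pxe x2 e2.
by have := maxM' _ m3; rewrite c3 c2; lia.
Qed.

Lemma maximum_matching_deg_sum x y : x \notin matchedU M -> y \notin matchedV M ->
  degU P x + degV P y <= #|M|.
Proof.
move=> xM yM; set Nx := [set e in M | P x e.2]; set Ny := [set e in M | P e.1 y].
have le_x : degU P x <= #|Nx|.
  apply: leq_trans (leq_imset_card (fun e : U * V => e.2) Nx).
  apply/subset_leq_card/subsetP.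
  move=> w; rewrite inE => Pxw; case/imsetP: (maximum_matching_nbrV xM Pxw) => e eM wE.
  by rewrite wE; apply: imset_f; rewrite inE eM -wE Pxw.
have le_y : degV P y <= #|Ny|.
  apply: leq_trans (leq_imset_card (fun e : U * V => e.1) Ny).
  apply/subset_leq_card/subsetP.
  move=> w; rewrite inE => Pwy; case/imsetP: (maximum_matching_nbrU yM Pwy) => e eM wE.
  by rewrite wE; apply: imset_f; rewrite inE eM -wE Pwy.
have dis : [disjoint Nx & Ny].
  apply/pred0P=> e /=; apply/negP; rewrite !inE => /andP[/andP[eM Pxe] /andP[_ Pey]].
  exact: maximum_matching_no_augmenting_3path eM Pxe Pey xM yM.
have : #|Nx :|: Ny| <= #|M|.
  by apply/subset_leq_card/subsetP => e; rewrite !inE => /orP[] /andP[].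
by rewrite card_disjointU //; lia.
Qed.

Lemma maximum_matching_degU x : x \notin matchedU M -> #|M| < #|V| -> degU P x <= #|M|.
Proof.
case: maxM => mM _ xM ltMV.
have : 0 < #|~: matchedV M| by rewrite card_unmatchedV //; lia.
by case/card_gt0P=> y; rewrite inE => /(maximum_matching_deg_sum xM); lia.
Qed.

Lemma maximum_matching_degV y : y \notin matchedV M -> #|M| < #|U| -> degV P y <= #|M|.
Proof.
case: maxM => mM _ yM ltMU.
have : 0 < #|~: matchedU M| by rewrite card_unmatchedU //; lia.
by case/card_gt0P=> x; rewrite inE => /maximum_matching_deg_sum/(_ yM); lia.
Qed.

End Maximum.

Lemma covered_matchedE M :
  covered M = [set inl x | x in matchedU M] :|: [set inr y | y in matchedV M].
Proof.
apply/setP=> w; rewrite !inE; apply/exists_inP/orP.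
  by case=> e eM /orP[] /eqP ->; [left | right]; apply: imset_f; apply: imset_f.
case=> /imsetP[_ /imsetP[e eM ->] ->]; exists e; rewrite ?eqxx ?orbT //.
Qed.

Lemma card_uncovered M : is_matching P M -> #|~: covered M| = #|U| + #|V| - 2 * #|M|.
Proof.
move=> mM; rewrite cardsCs setCK card_sum covered_matchedE card_disjointU; last first.
  by apply/pred0P=> w /=; apply/negP => /andP[/imsetP[? _ ->] /imsetP[]].
have inl_inj : injective (@inl U V) by move=> ? ? [].
have inr_inj : injective (@inr U V) by move=> ? ? [].
rewrite (card_imset _ inl_inj) (card_imset _ inr_inj).
by rewrite card_matchedU // card_matchedV //; lia.
Qed.

Lemma covered_split_disjoint M (p : pred (U * V)) : is_matching P M ->
  [disjoint covered [set e in M | p e] & covered [set e in M | ~~ p e]].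
Proof.
move=> [_ injM]; apply/pred0P=> w /=; apply/negP.
rewrite !inE => /andP[/exists_inP[e + we] /exists_inP[e' + we']].
rewrite !inE => /andP[eM pe] /andP[e'M]; apply/negP; apply/negPn.
have <- : e = e' by apply: injM => //; move: we we' => /orP[] /eqP -> /orP[] /eqP []; auto.
exact: pe.
Qed.

End Matchings.

Lemma eq_or_negb (a c : bool) : a = c \/ a = ~~ c.
Proof. by case: a; case: c; auto. Qed.

Section Components.
Variables (U V : finType) (adj col : U -> V -> bool).
Local Notation T := (U + V)%type.
Implicit Types (c : bool) (z w : T) (u : U) (v : V).

Definition mono c u v := adj u v && (col u v == c).

Definition component c z : {set T} := [set w | connect (colrel adj col c) z w].

Lemma colrel_sym c : symmetric (colrel adj col c).
Proof. by case=> ? [] ?. Qed.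

Lemma component_refl c z : z \in component c z.
Proof. by rewrite inE connect0. Qed.

Lemma component_sym c z w : w \in component c z -> z \in component c w.
Proof. by rewrite !inE (sym_connect_sym (colrel_sym c)). Qed.

Lemma component_trans c z w y :
  w \in component c z -> y \in component c w -> y \in component c z.
Proof. rewrite !inE; exact: connect_trans. Qed.

Lemma component_edge c z u v :
  mono c u v -> (inl u \in component c z) = (inr v \in component c z).
Proof.
move=> cuv; have uv : inr v \in component c (inl u) by rewrite inE connect1.
by apply/idP/idP => [/component_trans | /component_trans]; apply => //; apply: component_sym.
Qed.

Lemma component_adj z u v : adj u v ->
  (inl u \in component (col u v) z) = (inr v \in component (col u v) z).
Proof. by move=> uv; apply: component_edge; rewrite /mono uv eqxx. Qed.

Lemma component_adj_cross c z u v : adj u v ->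
  inl u \in component c z -> inr v \in component (~~ c) z ->
  (inl u \in component (~~ c) z) || (inr v \in component c z).
Proof.
move=> uv uc vc; have := component_adj z uv.
have [-> e | -> e] := eq_or_negb (col u v) c; first by rewrite -e uc orbT.
by rewrite e vc.
Qed.

Lemma card_disjoint_components c z w : z \notin component c w ->
  #|component c z| + #|component c w| <= #|U| + #|V|.
Proof.
move=> zw; rewrite -card_sum -card_disjointU ?max_card //.
apply/pred0P=> y /=; apply/negP => /andP[yz yw].
by case/negP: zw; apply: component_trans yw (component_sym yz).
Qed.

Lemma degU_mono_split c u : degU adj u = degU (mono c) u + degU (mono (~~ c)) u.
Proof.
rewrite /degU -(cardsID [set v | col u v == c] [set v | adj u v]).
congr (_ + _); apply: eq_card => v; rewrite !inE /mono;
  by case: (adj u v); case: (col u v); case: c.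
Qed.

Lemma degV_mono_split c v : degV adj v = degV (mono c) v + degV (mono (~~ c)) v.
Proof.
rewrite /degV -(cardsID [set u | col u v == c] [set u | adj u v]).
congr (_ + _); apply: eq_card => u; rewrite !inE /mono;
  by case: (adj u v); case: (col u v); case: c.
Qed.

(* The [c]-neighbours of [x] and of [y] lie on opposite sides of one
   [c]-component. *)
Lemma mono_nbrs_component c x y : mono c x y ->
  degU (mono c) x + degV (mono c) y <= #|component c (inl x)|.
Proof.
move=> cxy; set Nx := [set inr v | v in [set v | mono c x v]] : {set T}.
set Ny := [set inl u | u in [set u | mono c u y]] : {set T}.
have -> : degU (mono c) x + degV (mono c) y = #|Nx :|: Ny|.
  rewrite card_disjointU; last first.
    by apply/pred0P=> w /=; apply/negP => /andP[/imsetP[? _ ->] /imsetP[]].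
  by rewrite !card_imset //; move=> ? ? [].
apply/subset_leq_card/subsetP => w /setUP[] /imsetP[t]; rewrite inE => ct ->.
  by rewrite -(component_edge _ ct) component_refl.
by rewrite (component_edge _ ct) -(component_edge _ cxy) component_refl.
Qed.

(* [r c] is the root of the chosen component of colour [c]; [rooted r] keeps
   the edges lying in the chosen component of their colour. *)
Section Rooted.
Variable r : bool -> T.

Definition rooted u v := adj u v && (inl u \in component (col u v) (r (col u v))).

Definition full w := (w \in component true (r true)) && (w \in component false (r false)).

Lemma rootedE u v :
  rooted u v = adj u v && (inr v \in component (col u v) (r (col u v))).
Proof. by rewrite /rooted; case uv: (adj u v); rewrite // component_adj. Qed.

Lemma degU_rooted_full u : full (inl u) -> degU rooted u = degU adj u.
Proof.
case/andP=> ut uf; apply: eq_card => v; rewrite !inE /rooted.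
by case: (adj u v); case: (col u v).
Qed.

Lemma degV_rooted_full v : full (inr v) -> degV rooted v = degV adj v.
Proof.
case/andP=> vt vf; apply: eq_card => u; rewrite !inE rootedE.
by case: (adj u v); case: (col u v).
Qed.

Lemma degU_rooted_mono c u :
  inl u \in component c (r c) -> inl u \notin component (~~ c) (r (~~ c)) ->
  degU rooted u = degU (mono c) u.
Proof.
move=> uc /negbTE unc; apply: eq_card => v; rewrite !inE /rooted /mono.
have [-> | ->] := eq_or_negb (col u v) c; first by rewrite uc eqxx.
by rewrite unc; case: (c); rewrite andbF.
Qed.

Lemma degV_rooted_mono c v :
  inr v \in component c (r c) -> inr v \notin component (~~ c) (r (~~ c)) ->
  degV rooted v = degV (mono c) v.
Proof.
move=> vc /negbTE vnc; apply: eq_card => u; rewrite !inE rootedE /mono.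
have [-> | ->] := eq_or_negb (col u v) c; first by rewrite vc eqxx.
by rewrite vnc; case: (c); rewrite andbF.
Qed.

(* All edges of colour [c] of a matching of [rooted] meet the one component
   [component c (r c)]. *)
Lemma rooted_connected_matching c M : is_matching rooted M ->
  (forall e, e \in M -> col e.1 e.2 = c) -> connected_matching adj col c M.
Proof.
move=> [rM injM] cM; have inK e : e \in M -> inl e.1 \in component c (r c).
  by move=> eM; have /andP[_] := rM e eM; rewrite (cM e eM).
split; [split=> // e eM | split=> // e e' eM e'M]; first by case/andP: (rM e eM).
by have := component_trans (component_sym (inK e eM)) (inK e' e'M); rewrite inE.
Qed.

End Rooted.
End Components.

Section SplitColourings.
Variables (U V : finType) (adj col : U -> V -> bool).
Local Notation component := (component adj col).

Definition double_edge u v :=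
  (inr v \in component true (inl u)) && (inr v \in component false (inl u)).

Definition even_four_cycles :=
  forall u u' v v', adj u v -> adj u v' -> adj u' v -> adj u' v' ->
  col u v (+) col u v' (+) col u' v (+) col u' v' = false.

(* The three other edges of the 4-cycle [p q p' q'] form a path of the colour
   not used by [p q]. *)
Lemma double_edge_of_odd_cycle p q p' q' :
  adj p q -> adj p q' -> adj p' q' -> adj p' q ->
  col p q' = ~~ col p q -> col p' q' = ~~ col p q -> col p' q = ~~ col p q ->
  double_edge p q.
Proof.
move=> pq pq' p'q' p'q c1 c2 c3; set c := ~~ col p q.
have mono_c a b : adj a b -> col a b = c -> mono adj col c a b.
  by move=> ab abc; rewrite /mono ab abc eqxx.
have q_c : inr q \in component c (inl p).
  rewrite -(component_edge _ (mono_c _ _ p'q c3)) (component_edge _ (mono_c _ _ p'q' c2)).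
  by rewrite -(component_edge _ (mono_c _ _ pq' c1)) component_refl.
have q_pq : inr q \in component (col p q) (inl p) by rewrite -component_adj // component_refl.
by rewrite /double_edge; move: q_c q_pq; rewrite /c; case: (col p q) => /= -> ->.
Qed.

Lemma even_four_cycles_of_no_double_edge :
  (forall u v, adj u v -> ~~ double_edge u v) -> even_four_cycles.
Proof.
move=> nodouble u u' v v' uv uv' u'v u'v'.
have odd p q p' q' : adj p q -> adj p q' -> adj p' q' -> adj p' q ->
    col p q' = ~~ col p q -> col p' q' = ~~ col p q -> col p' q = ~~ col p q -> False.
  move=> pq pq' p'q' p'q c1 c2 c3; case/negP: (nodouble _ _ pq).
  exact: double_edge_of_odd_cycle pq pq' p'q' p'q c1 c2 c3.
case e1: (col u v); case e2: (col u v'); case e3: (col u' v); case e4: (col u' v') => //=;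
  exfalso.
all: first
  [ by apply: (odd u v u' v'); rewrite ?e1 ?e2 ?e3 ?e4
  | by apply: (odd u v' u' v); rewrite ?e1 ?e2 ?e3 ?e4
  | by apply: (odd u' v u v'); rewrite ?e1 ?e2 ?e3 ?e4
  | by apply: (odd u' v' u v); rewrite ?e1 ?e2 ?e3 ?e4 ].
Qed.

(* [u \in A] iff [u] and [u0] see some common neighbour in the same colour,
   and [v \in C] iff some edge [u v] is red exactly when [u \notin A]; by
   evenness of 4-cycles neither depends on the neighbour consulted. *)
Lemma split_of_even_four_cycles (u0 : U) :
  (forall u1 u2 u3, exists t, [/\ adj u1 t, adj u2 t & adj u3 t]) ->
  even_four_cycles -> split_colouring adj col.
Proof.
move=> common even.
set A := [set u | if [pick t | adj u0 t && adj u t] is Some t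
                    then col u t == col u0 t else true].
have inA u t : adj u0 t -> adj u t -> (u \in A) = (col u t == col u0 t).
  move=> u0t ut; rewrite inE; case: pickP => [w /andP[u0w uw] | /(_ t)]; last by rewrite u0t ut.
  have := even u0 u w t u0w u0t uw ut.
  by case: (col u0 w); case: (col u0 t); case: (col u w); case: (col u t).
have consistent u u' v : adj u v -> adj u' v ->
    ((u \in A) != col u v) = ((u' \in A) != col u' v).
  move=> uv u'v; have [t [u0t ut u't]] := common u0 u u'.
  rewrite (inA u t u0t ut) (inA u' t u0t u't); have := even u u' t v ut uv u't u'v.
  by case: (col u0 t); case: (col u t); case: (col u v); case: (col u' t);
    case: (col u' v).
set C := [set v | if [pick u | adj u v] is Some u then (u \in A) != col u v else false].
have inC u v : adj u v -> (v \in C) = ((u \in A) != col u v).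
  move=> uv; rewrite inE; case: pickP => [u' u'v | /(_ u)]; last by rewrite uv.
  exact: consistent.
by exists A, C => u v uv; rewrite (inC u v uv); case: (u \in A); case: (col u v).
Qed.

End SplitColourings.

Section MinDegree.
Variables (U V : finType) (adj col : U -> V -> bool) (k f : nat).
Hypotheses (cardU : #|U| = k) (cardV : #|V| = k).
Hypotheses (degU_ge : forall u, k - f <= degU adj u) (degV_ge : forall v, k - f <= degV adj v).
Local Notation T := (U + V)%type.
Local Notation component := (component adj col).
Local Notation rooted := (rooted adj col).
Local Notation full := (full adj col).

Lemma card_nonnbrV u (S : {set V}) : (forall v, v \in S -> ~~ adj u v) -> #|S| <= f.
Proof.
move=> nS; have := degU_ge u; rewrite /degU => ge.
have dis : [disjoint S & [set v | adj u v]].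
  by apply/pred0P=> v /=; rewrite inE; apply/negP => /andP[/nS/negP].
by have := max_card (S :|: [set v | adj u v]); rewrite card_disjointU // cardV; lia.
Qed.

Lemma card_nonnbrU v (S : {set U}) : (forall u, u \in S -> ~~ adj u v) -> #|S| <= f.
Proof.
move=> nS; have := degV_ge v; rewrite /degV => ge.
have dis : [disjoint S & [set u | adj u v]].
  by apply/pred0P=> u /=; rewrite inE; apply/negP => /andP[/nS/negP].
by have := max_card (S :|: [set u | adj u v]); rewrite card_disjointU // cardU; lia.
Qed.

Lemma common_nbr3 : 3 * f < k ->
  forall u1 u2 u3, exists t, [/\ adj u1 t, adj u2 t & adj u3 t].
Proof.
move=> lt3f u1 u2 u3; have := degU_ge u1; have := degU_ge u2; have := degU_ge u3.
rewrite /degU => ge3 ge2 ge1.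
have := cardsUI [set t | adj u1 t] [set t | adj u2 t].
have := max_card ([set t | adj u1 t] :|: [set t | adj u2 t]); rewrite cardV => ? ?.
have [t] : exists2 t, t \in [set t | adj u1 t] :&: [set t | adj u2 t] & t \in [set t | adj u3 t].
  by apply: exists_inI; rewrite cardV; lia.
by rewrite !inE => /andP[? ?] ?; exists t.
Qed.

Section MaximumRooted.
Variables (r : bool -> T) (M : {set U * V}).
Hypothesis maxM : maximum_matching (rooted r) M.

Lemma unmatched_fullU x : x \notin matchedU M -> full r (inl x) -> k - #|M| <= f.
Proof.
move=> xM xfull; case: (ltnP #|M| k) => [ltMk | ]; last by lia.
have := maximum_matching_degU maxM xM; rewrite cardV degU_rooted_full // => /(_ ltMk).
by have := degU_ge x; lia.
Qed.

Lemma unmatched_fullV y : y \notin matchedV M -> full r (inr y) -> k - #|M| <= f.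
Proof.
move=> yM yfull; case: (ltnP #|M| k) => [ltMk | ]; last by lia.
have := maximum_matching_degV maxM yM; rewrite cardU degV_rooted_full // => /(_ ltMk).
by have := degV_ge y; lia.
Qed.

Lemma deficit_le_nonfullU : k - #|M| <= maxn f #|[set u | ~~ full r (inl u)]|.
Proof.
have [mM _] := maxM; rewrite leq_max.
case: (leqP (k - #|M|) #|[set u | ~~ full r (inl u)]|) => [_ | large]; rewrite ?orbT //.
have [x] : exists2 x, x \in ~: matchedU M & x \in [set u | full r (inl u)].
  apply: exists_inI; have := card_set_predC (fun u => full r (inl u)).
  by rewrite (card_unmatchedU mM) cardU; lia.
by rewrite !inE => xM /(unmatched_fullU xM) ->.
Qed.

Lemma deficit_le_nonfullV : k - #|M| <= maxn f #|[set v | ~~ full r (inr v)]|.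
Proof.
have [mM _] := maxM; rewrite leq_max.
case: (leqP (k - #|M|) #|[set v | ~~ full r (inr v)]|) => [_ | large]; rewrite ?orbT //.
have [y] : exists2 y, y \in ~: matchedV M & y \in [set v | full r (inr v)].
  apply: exists_inI; have := card_set_predC (fun v => full r (inr v)).
  by rewrite (card_unmatchedV mM) cardV; lia.
by rewrite !inE => yM /(unmatched_fullV yM) ->.
Qed.

(* Unmatched [x], [y] inside [component c (r c)] avoiding the largest
   [~~ c]-component can be chosen adjacent; the edge [x y] then has colour
   [~~ c], so the [~~ c]-component of [x] holds the [~~ c]-neighbours of both,
   yet being disjoint from the largest one it has at most [k] vertices, while
   the [c]-degrees of [x] and [y] add up to at most [#|M|]. *)
Lemma deficit_le_spanning c :
  (forall w, #|component (~~ c) w| <= #|component (~~ c) (r (~~ c))|) ->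
  #|[set u | inl u \notin component c (r c)]| <= 2 * f ->
  #|[set v | inr v \notin component c (r c)]| <= 2 * f ->
  k - #|M| <= 4 * f.
Proof.
move=> largest missU missV; have [mM _] := maxM.
rewrite leqNgt; apply/negP => large.
have fullK w : w \in component c (r c) -> w \in component (~~ c) (r (~~ c)) -> full r w.
  by rewrite /full; case: (c) => /= -> ->.
have [x xM xK] :
    exists2 x, x \in ~: matchedU M & x \in [set u | inl u \in component c (r c)].
  apply: exists_inI; have := card_set_predC (fun u => inl u \in component c (r c)).
  by rewrite (card_unmatchedU mM) cardU; lia.
rewrite in_setC in xM; rewrite inE in xK.
have xK' : inl x \notin component (~~ c) (r (~~ c)).
  by apply/negP => /(fullK _ xK) /(unmatched_fullU xM); lia.
have [y xy] : exists2 y, y \in [set v | adj x v] &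
    y \in ~: matchedV M :&: [set v | inr v \in component c (r c)].
  apply: exists_inI; have := card_set_predC (fun v => inr v \in component c (r c)).
  have := cardsUI (~: matchedV M) [set v | inr v \in component c (r c)].
  have := max_card (~: matchedV M :|: [set v | inr v \in component c (r c)]).
  have := degU_ge x; rewrite /degU (card_unmatchedV mM) cardV; lia.
rewrite inE in xy; case/setIP; rewrite in_setC => yM; rewrite [_ \in _]inE => yK.
have yK' : inr y \notin component (~~ c) (r (~~ c)).
  by apply/negP => /(fullK _ yK) /(unmatched_fullV yM); lia.
have colxy : mono adj col (~~ c) x y.
  rewrite /mono xy; apply/eqP.
  have : col x y != c.
    apply/eqP => cxy; apply: (maximum_matching_no_free_edge maxM _ xM yM).
    by rewrite /rooted xy cxy xK.
  by case: (col x y); case: (c).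
have := maximum_matching_deg_sum maxM xM yM.
rewrite (degU_rooted_mono xK xK') (degV_rooted_mono yK yK').
have := mono_nbrs_component colxy; have := card_disjoint_components xK'.
have := largest (inl x).
have := degU_mono_split adj col c x; have := degV_mono_split adj col c y.
have := degU_ge x; have := degV_ge y; rewrite cardU cardV; lia.
Qed.

End MaximumRooted.

Definition good_roots (r : bool -> T) :=
  forall M, maximum_matching (rooted r) M -> k - #|M| <= 4 * f.

Section DoubleEdge.
Variables (us : U) (vs : V).
Hypothesis double : double_edge adj col us vs.
Let z0 : T := inl us.

Let onlyU c :=
  [set u | (inl u \in component c z0) && (inl u \notin component (~~ c) z0)].
Let onlyV c :=
  [set v | (inr v \in component c z0) && (inr v \notin component (~~ c) z0)].

Lemma card_noneU :
  #|[set u | (inl u \notin component true z0) && (inl u \notin component false z0)]| <= f.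
Proof.
apply: (card_nonnbrU (v := vs)) => u; rewrite inE; apply: contraTN => uvs.
have : inl u \in component (col u vs) z0.
  by rewrite component_adj //; case/andP: double; case: (col u vs).
by case: (col u vs) => ->; rewrite ?andbF.
Qed.

Lemma card_noneV :
  #|[set v | (inr v \notin component true z0) && (inr v \notin component false z0)]| <= f.
Proof.
apply: (card_nonnbrV (u := us)) => v; rewrite inE; apply: contraTN => usv.
have : inr v \in component (col us v) z0 by rewrite -component_adj // component_refl.
by case: (col us v) => ->; rewrite ?andbF.
Qed.

Lemma card_onlyV_of_onlyU c u : u \in onlyU c -> #|onlyV (~~ c)| <= f.
Proof.
rewrite inE => /andP[uc unc]; apply: (card_nonnbrV (u := u)) => v.
rewrite inE negbK => /andP[vnc vc].
apply/negP => uv; move: (component_adj_cross uv uc vnc).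
by rewrite (negbTE unc) (negbTE vc).
Qed.

Lemma good_roots_const_U :
  #|onlyU true| <= f -> #|onlyU false| <= f -> good_roots (fun=> z0).
Proof.
move=> small1 small0 M maxM; have := deficit_le_nonfullU maxM; have := card_noneU.
set N := [set u | (inl u \notin component true z0) && (inl u \notin component false z0)].
have sub : [set u | ~~ full (fun=> z0) (inl u)] \subset onlyU true :|: onlyU false :|: N.
  apply/subsetP=> u; rewrite !inE /full !inE /=.
  by case: (connect _ z0 (inl u)); case: (connect _ z0 (inl u)).
have [le2 _] := leq_card_setU (onlyU true) (onlyU false).
have [le3 _] := leq_card_setU (onlyU true :|: onlyU false) N.
have := subset_leq_card sub; lia.
Qed.

Lemma good_roots_const_V :
  #|onlyV true| <= f -> #|onlyV false| <= f -> good_roots (fun=> z0).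
Proof.
move=> small1 small0 M maxM; have := deficit_le_nonfullV maxM; have := card_noneV.
set N := [set v | (inr v \notin component true z0) && (inr v \notin component false z0)].
have sub : [set v | ~~ full (fun=> z0) (inr v)] \subset onlyV true :|: onlyV false :|: N.
  apply/subsetP=> v; rewrite !inE /full !inE /=.
  by case: (connect _ z0 (inr v)); case: (connect _ z0 (inr v)).
have [le2 _] := leq_card_setU (onlyV true) (onlyV false).
have [le3 _] := leq_card_setU (onlyV true :|: onlyV false) N.
have := subset_leq_card sub; lia.
Qed.

Lemma good_roots_spanning c : #|onlyU (~~ c)| <= f -> #|onlyV (~~ c)| <= f ->
  exists r, good_roots r.
Proof.
move=> smallU smallV; have := card_noneU; have := card_noneV.
set NV := [set v | _]; set NU := [set u | _] => noneV noneU.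
have [zm _ largest] := @arg_maxnP T z0 xpredT (fun w => #|component (~~ c) w|) isT.
exists (fun b => if b == c then z0 else zm) => M maxM.
have nc : (~~ c == c) = false by case: (c).
apply: (deficit_le_spanning maxM (c := c)) => /=; rewrite ?eqxx ?nc.
- by move=> w; apply: largest.
- have sub : [set u | inl u \notin component c z0] \subset onlyU (~~ c) :|: NU.
    apply/subsetP=> u; rewrite !inE negbK.
    by case: (c); case: (connect _ z0 (inl u)); case: (connect _ z0 (inl u)).
  have [le _] := leq_card_setU (onlyU (~~ c)) NU.
  by apply: leq_trans (subset_leq_card sub) _; lia.
- have sub : [set v | inr v \notin component c z0] \subset onlyV (~~ c) :|: NV.
    apply/subsetP=> v; rewrite !inE negbK.
    by case: (c); case: (connect _ z0 (inr v)); case: (connect _ z0 (inr v)).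
  have [le _] := leq_card_setU (onlyV (~~ c)) NV.
  by apply: leq_trans (subset_leq_card sub) _; lia.
Qed.

Lemma exists_good_roots_of_double_edge : exists r, good_roots r.
Proof.
have pick_large (X : finType) (S : {set X}) : f < #|S| -> exists x, x \in S.
  by move=> ?; apply/card_gt0P; lia.
have const_V : #|onlyV true| <= f -> #|onlyV false| <= f -> exists r, good_roots r.
  by move=> ? ?; exists (fun=> z0); apply: good_roots_const_V.
case: (leqP #|onlyU true| f) => [U1 | /pick_large[u1 u1U]];
  case: (leqP #|onlyU false| f) => [U0 | /pick_large[u0 u0U]].
- by exists (fun=> z0); apply: good_roots_const_U.
- have V1 := card_onlyV_of_onlyU u0U.
  case: (leqP #|onlyV false| f) => [/(const_V V1) // | _].
  exact: (good_roots_spanning (c := false)).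
- have V0 := card_onlyV_of_onlyU u1U.
  case: (leqP #|onlyV true| f) => [/const_V/(_ V0) // | _].
  exact: (good_roots_spanning (c := true)).
- exact: const_V (card_onlyV_of_onlyU u0U) (card_onlyV_of_onlyU u1U).
Qed.

End DoubleEdge.

Lemma exists_good_roots : 5 * f < k -> ~ split_colouring adj col -> exists r, good_roots r.
Proof.
move=> lt5f nsplit; have /card_gt0P[u0 _] : 0 < #|U| by lia.
case: (boolP [exists u, exists v, double_edge adj col u v]).
  by case/existsP=> us /existsP[vs]; apply: exists_good_roots_of_double_edge.
move=> nodouble; case: nsplit.
apply: (split_of_even_four_cycles u0 (common_nbr3 _)); first by lia.
apply: even_four_cycles_of_no_double_edge => u v _; apply/negP => duv.
by apply: (negP nodouble); apply/existsP; exists u; apply/existsP; exists v.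
Qed.

End MinDegree.

Lemma covered_split (U V : finType) (M : {set U * V}) (p : pred (U * V)) :
  covered [set e in M | p e] :|: covered [set e in M | ~~ p e] = covered M.
Proof.
apply/setP=> w; rewrite !inE; apply/orP/exists_inP.
  by case=> /exists_inP[e]; rewrite inE => /andP[eM _] we; exists e.
case=> e eM we; case pe: (p e); [left | right]; apply/exists_inP; exists e => //.
  by rewrite inE eM pe.
by rewrite inE eM pe.
Qed.

Lemma colour_split_rooted_matching (U V : finType) (adj col : U -> V -> bool) r M :
  is_matching (rooted adj col r) M ->
  let MR := [set e in M | col e.1 e.2] in let MB := [set e in M | ~~ col e.1 e.2] in
  [/\ connected_matching adj col true MR, connected_matching adj col false MB,
      [disjoint covered MR & covered MB] &
      #|~: (covered MR :|: covered MB)| = #|U| + #|V| - 2 * #|M|].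
Proof.
move=> mM MR MB.
have sub (p : pred (U * V)) : [set e in M | p e] \subset M.
  by apply/subsetP=> e; rewrite inE => /andP[].
split; last 2 first.
- exact: covered_split_disjoint mM.
- by rewrite covered_split (card_uncovered mM).
- apply: rooted_connected_matching (matching_subset mM (sub _)) _.
  by move=> e; rewrite inE => /andP[_ ->].
- apply: rooted_connected_matching (matching_subset mM (sub _)) _.
  by move=> e; rewrite inE => /andP[_ /negbTE].
Qed.

Lemma deficiency_le_eps (R : realFieldType) (eps : R) (k d : nat) : (0 < eps)%R ->
  ((1 - eps) * (k + k)%:R / 2 <= d%:R)%R -> ((k - d)%:R <= eps * k%:R)%R.
Proof.
move=> eps_gt0; case: (leqP d k) => [le_dk | lt_kd]; first by rewrite natrB // natrD; lra.
by rewrite (_ : k - d = 0)%N; [rewrite mulr_ge0 ?ler0n // ltW | lia].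
Qed.

Lemma exists_deficiency_bound (R : realFieldType) (eps : R) (U V : finType)
    (adj : U -> V -> bool) (k : nat) : (0 < eps)%R ->
  (forall u, ((1 - eps) * (k + k)%:R / 2 <= (degU adj u)%:R)%R) ->
  (forall v, ((1 - eps) * (k + k)%:R / 2 <= (degV adj v)%:R)%R) ->
  exists f, [/\ forall u, k - f <= degU adj u, forall v, k - f <= degV adj v
              & (f%:R <= eps * k%:R)%R].
Proof.
move=> eps_gt0 degU_ge degV_ge.
pose deficiency (w : U + V) :=
  k - (match w with inl u => degU adj u | inr v => degV adj v end).
exists (\max_w deficiency w); split.
- by move=> u; have := leq_bigmax (inl u) : deficiency (inl u) <= _; rewrite /deficiency; lia.
- by move=> v; have := leq_bigmax (inr v) : deficiency (inr v) <= _; rewrite /deficiency; lia.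
apply: (big_ind (fun m : nat => m%:R <= eps * k%:R)%R).
- by rewrite mulr_ge0 ?ler0n // ltW.
- by move=> a b a_le b_le; rewrite /maxn; case: ifP.
by case=> [u | v] _; apply: deficiency_le_eps.
Qed.

Theorem lemma4p3 (R : realFieldType) (eps : R) (U V : finType)
    (adj col : U -> V -> bool) :
  (0 < eps)%R -> (eps < 1 / 5)%R ->
  #|U| = #|V| ->
  (forall u : U, ((1 - eps) * (#|U| + #|V|)%:R / 2 <= (degU adj u)%:R)%R) ->
  (forall v : V, ((1 - eps) * (#|U| + #|V|)%:R / 2 <= (degV adj v)%:R)%R) ->
  ~ split_colouring adj col ->
  exists MR MB : {set U * V},
    [/\ connected_matching adj col true MR,
        connected_matching adj col false MB,
        [disjoint covered MR & covered MB] &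
        ((#|~: (covered MR :|: covered MB)|)%:R <= 4 * eps * (#|U| + #|V|)%:R)%R].
Proof.
move=> eps_gt0 eps_lt cardUV degU_ge degV_ge nsplit.
set k := #|U| in cardUV degU_ge degV_ge *; rewrite -cardUV in degU_ge degV_ge *.
have [f [fU fV f_le]] := exists_deficiency_bound eps_gt0 degU_ge degV_ge.
have k_gt0 : 0 < k.
  rewrite lt0n; apply/negP => /eqP k0; apply: nsplit; exists set0, set0 => u.
  by have := max_card (pred1 u); rewrite card1 -/k k0.
have lt5f : 5 * f < k.
  rewrite -(ltr_nat R) natrM; have : (0 < k%:R :> R)%R by rewrite ltr0n.
  by nra.
have [r good] := exists_good_roots (erefl k) (esym cardUV) fU fV lt5f nsplit.
have [M maxM] := exists_maximum_matching (rooted adj col r).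
have [MR_conn MB_conn disj uncovered] := colour_split_rooted_matching maxM.1.
exists [set e in M | col e.1 e.2], [set e in M | ~~ col e.1 e.2]; split=> //.
apply: (@le_trans _ _ (8 * f)%:R%R).
  by rewrite ler_nat uncovered -cardUV; have := good M maxM; lia.
by rewrite natrM natrD; lra.
Qed.
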